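(* Let $S$ be a finite inverse semigroup. Then a $\mathscr J$-class $J$ of $S$ is $\mathsf{RM}$-irreducible if and only if all its elements are join irreducible in the natural partial order on $S$. Moreover, for a $\mathscr J$-class $J$ with idempotent $e_J\in J$ and maximal subgroup $G_J$ at $e_J$, we have $M_J=\{g\in G_J\mid \text{for all } f\in S,\ f<e_J\implies f<g\}$.
   Context: In an inverse semigroup every $\mathscr J$-class is regular; $\mathscr J$-classes are ordered by $J'\le J$ iff $S^1J'S^1\subseteq S^1JS^1$. For a $\mathscr J$-class $J$: $s\equiv_{\mathsf{RM},J}t$ iff for all $x\in J$, $xs\in J\iff xt\in J$, and if both lie in $J$ then $xs=xt$. $J$ is $\mathsf{RM}$-irreducible if $\bigcap_{J'<J}\equiv_{\mathsf{RM},J'}\not\subseteq\equiv_{\mathsf{RM},J}$ (the empty intersection is the universal relation). $M_J=\{g\in G_J\mid g\equiv_{\mathsf{RM},J'}e_J\text{ for all } J'<J\}$. The natural partial order is $s\le t$ iff $s=et$ for some idempotent $e$. An element $s$ is join reducible if it is the least upper bound in the natural partial order of some set of elements strictly below it (the least upper bound of the empty set being a minimum element of $S$, if one exists), and join irreducible otherwise. *)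

From mathcomp Require Import all_boot.
Set Implicit Arguments. Unset Strict Implicit. Unset Printing Implicit Defensive.

Section InvSemigroup.
Variables (T : finType) (mul : T -> T -> T).

Definition inverse_semigroup : Prop :=
  forall s : T, exists! t : T, mul (mul s t) s = s /\ mul (mul t s) t = t.

Definition idempotent_el (e : T) : Prop := mul e e = e.

(* x \in S^1 s S^1 *)
Definition in_ideal (s x : T) : Prop :=
  x = s \/ (exists y, x = mul y s) \/ (exists y, x = mul s y) \/
  (exists y z, x = mul (mul y s) z).
Definition in_rideal (s x : T) : Prop := x = s \/ exists y, x = mul s y.
Definition in_lideal (s x : T) : Prop := x = s \/ exists y, x = mul y s.

Definition Jrel (s t : T) : Prop := forall x, in_ideal s x <-> in_ideal t x.
Definition Rrel (s t : T) : Prop := forall x, in_rideal s x <-> in_rideal t x.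
Definition Lrel (s t : T) : Prop := forall x, in_lideal s x <-> in_lideal t x.
Definition Hrel (s t : T) : Prop := Rrel s t /\ Lrel s t.

Definition Jclass (J : {set T}) : Prop :=
  exists s, forall t, t \in J <-> Jrel s t.

Definition in_set_ideal (A : {set T}) (x : T) : Prop :=
  exists2 a, a \in A & in_ideal a x.

Definition Jle (J' J : {set T}) : Prop :=
  forall x, in_set_ideal J' x -> in_set_ideal J x.
Definition Jlt (J' J : {set T}) : Prop := Jle J' J /\ J' <> J.

Definition rm_equiv (J : {set T}) (s t : T) : Prop :=
  forall x, x \in J ->
    (mul x s \in J <-> mul x t \in J) /\
    (mul x s \in J -> mul x t \in J -> mul x s = mul x t).

Definition RM_irreducible (J : {set T}) : Prop :=
  ~ (forall s t : T,
       (forall J', Jclass J' -> Jlt J' J -> rm_equiv J' s t) ->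
       rm_equiv J s t).

Definition nle (s t : T) : Prop := exists e, idempotent_el e /\ s = mul e t.
Definition nlt (s t : T) : Prop := nle s t /\ s <> t.

Definition is_lub (X : {set T}) (s : T) : Prop :=
  (forall x, x \in X -> nle x s) /\
  (forall u, (forall x, x \in X -> nle x u) -> nle s u).

Definition join_reducible (s : T) : Prop :=
  exists X : {set T}, (forall x, x \in X -> nlt x s) /\ is_lub X s.
Definition join_irreducible (s : T) : Prop := ~ join_reducible s.

(* g \in M_J, where e is the idempotent of J and G_J = H-class of e *)
Definition in_MJ (J : {set T}) (e g : T) : Prop :=
  Hrel g e /\ forall J', Jclass J' -> Jlt J' J -> rm_equiv J' g e.

End InvSemigroup.

From mathcomp Require Import all_boot.
Set Implicit Arguments. Unset Strict Implicit. Unset Printing Implicit Defensive.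

(* If [J' < J], [x] is in [J']
   and [e] is an idempotent of [J], then [f = inv x x e] is strictly below [e]
   and [x e = x e f]; so [e] and [e u] act alike on [J'] as soon as [u] lies
   above everything strictly below [e].  This gives the description of [M_J],
   and shows that if [J] is RM-reducible then [e] is the join of the elements
   strictly below it.
   Conversely, if some element of [J] is such a join then so is every
   idempotent of [J] (they are all D-related, since S is finite).  Given
   [a =_RM b] on all [J' < J] and [x], [x a] in [J], the idempotent
   [e = inv x x] satisfies [e <= a inv a] and [y a = y b] for all [y < e];
   hence [e <= b inv a], which forces [e a = e b] and [x a = x b]. *)

Section InverseSemigroup.
Variables (T : finType) (mul : T -> T -> T).
Hypothesis mulA : associative mul.
Hypothesis mul_inverse : inverse_semigroup mul.

Local Notation "x ⋅ y" := (mul x y) (at level 40, left associativity).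
Local Notation idem := (idempotent_el mul).
Local Notation "x ≼ y" := (nle mul x y) (at level 70).
Local Notation "x ≺ y" := (nlt mul x y) (at level 70).

Local Ltac reassoc := by rewrite !mulA.

Definition inv (s : T) : T :=
  odflt s [pick t | (s ⋅ t ⋅ s == s) && (t ⋅ s ⋅ t == t)].

Lemma inv_spec s : s ⋅ inv s ⋅ s = s /\ inv s ⋅ s ⋅ inv s = inv s.
Proof.
rewrite /inv; case: pickP => [t /andP[/eqP -> /eqP ->] // | no_inverse].
have [t [[sts tst] _]] := mul_inverse s.
by move: (no_inverse t); rewrite sts tst !eqxx.
Qed.

Lemma mulVK s : s ⋅ inv s ⋅ s = s. Proof. by case: (inv_spec s). Qed.
Lemma invVK s : inv s ⋅ s ⋅ inv s = inv s. Proof. by case: (inv_spec s). Qed.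

Lemma inv_unique s t : s ⋅ t ⋅ s = s -> t ⋅ s ⋅ t = t -> t = inv s.
Proof.
move=> sts tst; have [u [_ u_unique]] := mul_inverse s.
by rewrite -(u_unique t (conj sts tst)) -(u_unique _ (inv_spec s)).
Qed.

Lemma invK s : inv (inv s) = s.
Proof. by symmetry; apply: inv_unique; [apply: invVK | apply: mulVK]. Qed.

Lemma inv_idem e : idem e -> inv e = e.
Proof. by move=> ee; symmetry; apply: inv_unique; rewrite !ee. Qed.

Lemma idem_mulV s : idem (s ⋅ inv s).
Proof. by rewrite /idempotent_el mulA mulVK. Qed.

Lemma idem_Vmul s : idem (inv s ⋅ s).
Proof. by rewrite /idempotent_el mulA invVK. Qed.

(* The inverse [x] of [e f] satisfies [x = f x e], which makes [x], hence
   [e f = inv x], idempotent. *)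
Lemma idemM e f : idem e -> idem f -> idem (e ⋅ f).
Proof.
move=> ee ff; set x := inv (e ⋅ f).
have xefx : x ⋅ (e ⋅ f) ⋅ x = x by apply: invVK.
have fxe : f ⋅ x ⋅ e = x.
  apply: inv_unique.
  - transitivity (e ⋅ (f ⋅ f) ⋅ x ⋅ (e ⋅ e) ⋅ f); first reassoc.
    rewrite ee ff; transitivity ((e ⋅ f) ⋅ x ⋅ (e ⋅ f)); first reassoc.
    exact: mulVK.
  - transitivity (f ⋅ x ⋅ (e ⋅ e) ⋅ (f ⋅ f) ⋅ x ⋅ e); first reassoc.
    rewrite ee ff; transitivity (f ⋅ (x ⋅ (e ⋅ f) ⋅ x) ⋅ e); first reassoc.
    by rewrite xefx.
have xx : idem x.
  rewrite /idempotent_el -{1}fxe -{2}fxe.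
  transitivity (f ⋅ (x ⋅ (e ⋅ f) ⋅ x) ⋅ e); first reassoc.
  by rewrite xefx.
by rewrite -[e ⋅ f]invK -/x inv_idem.
Qed.

Lemma idemC e f : idem e -> idem f -> e ⋅ f = f ⋅ e.
Proof.
move=> ee ff; have ef := idemM ee ff; have fe := idemM ff ee.
rewrite -[f ⋅ e](inv_idem fe); apply: inv_unique.
- transitivity (f ⋅ (e ⋅ e) ⋅ (f ⋅ f) ⋅ e); first reassoc.
  by rewrite ee ff -[in RHS]fe !mulA.
- transitivity (e ⋅ (f ⋅ f) ⋅ (e ⋅ e) ⋅ f); first reassoc.
  by rewrite ee ff -[in RHS]ef !mulA.
Qed.

Lemma invM s t : inv (s ⋅ t) = inv t ⋅ inv s.
Proof.
symmetry; apply: inv_unique.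
- transitivity (s ⋅ ((t ⋅ inv t) ⋅ (inv s ⋅ s)) ⋅ t); first reassoc.
  rewrite (idemC (idem_mulV t) (idem_Vmul s)).
  transitivity ((s ⋅ inv s ⋅ s) ⋅ (t ⋅ inv t ⋅ t)); first reassoc.
  by rewrite !mulVK.
- transitivity (inv t ⋅ ((inv s ⋅ s) ⋅ (t ⋅ inv t)) ⋅ inv s); first reassoc.
  rewrite (idemC (idem_Vmul s) (idem_mulV t)).
  transitivity ((inv t ⋅ t ⋅ inv t) ⋅ (inv s ⋅ s ⋅ inv s)); first reassoc.
  by rewrite !invVK.
Qed.

Lemma nleE s t : s ≼ t <-> s = s ⋅ inv s ⋅ t.
Proof.
split=> [[e [ee ->]] | s_eq].
  2: by exists (s ⋅ inv s); split; first exact: idem_mulV.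
rewrite invM (inv_idem ee).
transitivity ((e ⋅ e) ⋅ (t ⋅ inv t ⋅ t)); first by rewrite ee mulVK.
transitivity (e ⋅ (e ⋅ (t ⋅ inv t)) ⋅ t); first reassoc.
by rewrite -(idemC (idem_mulV t) ee) !mulA.
Qed.

Lemma nle_mulr t e : idem e -> t ⋅ e ≼ t.
Proof.
move=> ee; apply/nleE; rewrite invM (inv_idem ee).
transitivity (t ⋅ ((e ⋅ e) ⋅ (inv t ⋅ t))); last reassoc.
by rewrite ee (idemC ee (idem_Vmul t)) !mulA mulVK.
Qed.

Lemma nle_idemE f e : idem f -> f ≼ e <-> f = f ⋅ e.
Proof.
by move=> ff; split=> [/nleE | ?]; [|apply/nleE]; rewrite (inv_idem ff) ff.
Qed.

Lemma idem_nle e f : idem e -> f ≼ e -> idem f.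
Proof. by move=> ee [g [gg ->]]; apply: idemM. Qed.

Lemma nle_trans s t u : s ≼ t -> t ≼ u -> s ≼ u.
Proof.
move=> [e [ee ->]] [f [ff ->]]; exists (e ⋅ f); split; first exact: idemM.
by rewrite mulA.
Qed.

Lemma nle_mulV_mull s y : y ≼ s -> y = s ⋅ inv s ⋅ y.
Proof.
move=> [e [ee ->]].
transitivity (e ⋅ (s ⋅ inv s ⋅ s)); first by rewrite mulVK.
transitivity (e ⋅ (s ⋅ inv s) ⋅ s); first reassoc.
by rewrite (idemC ee (idem_mulV s)) !mulA.
Qed.

Lemma idem_nle_of_sandwich e u : idem e -> e ⋅ u ⋅ e = e -> e ≼ u.
Proof.
move=> ee eue; exists e; split => //.
have /nleE : e ≼ e ⋅ u by rewrite -{1}eue; apply: nle_mulr.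
by rewrite (inv_idem ee) ee mulA ee.
Qed.

Lemma nle_of_mulV s t : s ⋅ inv t = t ⋅ inv t -> t ≼ s.
Proof.
move=> st; rewrite {1}(_ : t = s ⋅ (inv t ⋅ t)); first exact/nle_mulr/idem_Vmul.
by rewrite mulA st mulVK.
Qed.

Lemma mulV_nle a e : idem e -> a = e ⋅ a -> a ⋅ inv a ≼ e.
Proof.
move=> ee ea; apply/(nle_idemE _ (idem_mulV a)).
have Va : inv a = inv a ⋅ e by rewrite {1}ea invM (inv_idem ee).
by rewrite -mulA -Va.
Qed.

Lemma Vmul_nle a e : a = a ⋅ e -> inv a ⋅ a ≼ e.
Proof. by move=> ae; apply/(nle_idemE _ (idem_Vmul a)); rewrite -mulA -ae. Qed.

Definition in_SsS (s x : T) : bool := [exists a, exists b, x == a ⋅ s ⋅ b].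

Lemma in_SsSP s x : reflect (exists a b, x = a ⋅ s ⋅ b) (in_SsS s x).
Proof.
apply: (iffP existsP) => [[a /existsP [b /eqP ->]] | [a [b ->]]]; first by exists a, b.
by exists a; apply/existsP; exists b.
Qed.

Lemma in_idealE s x : in_ideal mul s x <-> in_SsS s x.
Proof.
split; last by move/in_SsSP => [a [b ->]]; do 3 right; exists a, b.
case=> [->|[[y ->]|[[y ->]|[y [z ->]]]]]; apply/in_SsSP.
- by exists (s ⋅ inv s), (inv s ⋅ s); rewrite !mulA !mulVK.
- by exists y, (inv (y ⋅ s) ⋅ (y ⋅ s)); rewrite mulA mulVK.
- by exists (s ⋅ y ⋅ inv (s ⋅ y)), y; rewrite -mulA mulVK.
- by exists y, z.
Qed.

Lemma in_SsS_refl s : in_SsS s s.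
Proof. by apply/in_idealE; left. Qed.

Lemma in_SsS_trans s t x : in_SsS s t -> in_SsS t x -> in_SsS s x.
Proof.
move=> /in_SsSP [a [b ->]] /in_SsSP [c [d ->]]; apply/in_SsSP.
by exists (c ⋅ a), (b ⋅ d); rewrite !mulA.
Qed.

Lemma in_SsS_mull s y : in_SsS s (y ⋅ s).
Proof. by apply/in_idealE; right; left; exists y. Qed.

Lemma in_SsS_mulr s y : in_SsS s (s ⋅ y).
Proof. by apply/in_idealE; right; right; left; exists y. Qed.

Lemma JrelE s t : Jrel mul s t <-> in_SsS s t /\ in_SsS t s.
Proof.
split=> [st | [st ts] x].
  by split; apply/in_idealE; [apply/(st t) | apply/(st s)]; left.
by split=> /in_idealE xS; apply/in_idealE; apply: in_SsS_trans xS.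
Qed.

Lemma Jrel_sym s t : Jrel mul s t -> Jrel mul t s.
Proof. by move=> st x; split=> /st. Qed.

Lemma Jrel_trans s t u : Jrel mul s t -> Jrel mul t u -> Jrel mul s u.
Proof. by move=> st tu x; split=> [/st/tu | /tu/st]. Qed.

Lemma Jrel_mulV s : Jrel mul s (s ⋅ inv s).
Proof.
apply/JrelE; split; first exact: in_SsS_mulr.
by move: (in_SsS_mulr (s ⋅ inv s) s); rewrite mulVK.
Qed.

Lemma Jrel_Vmul s : Jrel mul s (inv s ⋅ s).
Proof.
apply/JrelE; split; first exact: in_SsS_mull.
by move: (in_SsS_mull (inv s ⋅ s) s); rewrite mulA mulVK.
Qed.

Lemma Jclass_mem J t u : Jclass mul J -> t \in J -> (u \in J <-> Jrel mul t u).
Proof.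
move=> [s J_s] /J_s st; split=> [/J_s su | tu].
  exact: Jrel_trans (Jrel_sym st) su.
exact/J_s/(Jrel_trans st tu).
Qed.

Lemma Jclass_eq J J' s :
  Jclass mul J -> Jclass mul J' -> s \in J -> s \in J' -> J = J'.
Proof.
move=> cJ cJ' Js J's; apply/setP => x; apply/idP/idP.
  by move/(Jclass_mem _ cJ Js)/(Jclass_mem _ cJ' J's).
by move/(Jclass_mem _ cJ' J's)/(Jclass_mem _ cJ Js).
Qed.

Lemma Jclass_idem J : Jclass mul J -> exists2 e, e \in J & idem e.
Proof.
move=> cJ; have [s J_s] := cJ; have Js : s \in J by apply/J_s.
exists (s ⋅ inv s); last exact: idem_mulV.
exact/(Jclass_mem _ cJ Js)/Jrel_mulV.
Qed.

Definition Jclass_of (s : T) : {set T} := [set t | in_SsS s t && in_SsS t s].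

Lemma mem_Jclass_of s t : t \in Jclass_of s <-> Jrel mul s t.
Proof.
rewrite inE; split=> [/andP ? | /JrelE ?]; first exact/JrelE.
exact/andP.
Qed.

Lemma Jclass_of_Jclass s : Jclass mul (Jclass_of s).
Proof. by exists s => t; apply: mem_Jclass_of. Qed.

Lemma Jclass_of_self s : s \in Jclass_of s.
Proof. exact/mem_Jclass_of. Qed.

(* Stability of finite semigroups: [f S] is contained in [e S], which is
   contained in [a (f S)] when [e = a f b], so both have the same size. *)
Lemma idem_stable e f : idem e -> idem f -> f = f ⋅ e -> in_SsS f e -> f = e.
Proof.
move=> ee ff fe /in_SsSP [a [b eafb]].
have ef : e ⋅ f = f by rewrite (idemC ee ff) -fe.
have fS_eS : mul f @: setT \subset mul e @: setT.
  apply/subsetP => _ /imsetP [t _ ->]; apply/imsetP; exists (f ⋅ t) => //.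
  by rewrite mulA ef.
have eS_afS : mul e @: setT \subset mul a @: (mul f @: setT).
  apply/subsetP => _ /imsetP [t _ ->]; apply/imsetP; exists (f ⋅ (b ⋅ t)).
    exact: imset_f.
  by rewrite {1}eafb !mulA.
have fS_eq : mul f @: setT = mul e @: setT.
  apply/eqP; rewrite eqEcard fS_eS.
  exact: leq_trans (subset_leq_card eS_afS) (leq_imset_card _ _).
have : e \in mul f @: setT by rewrite fS_eq; apply/imsetP; exists e.
case/imsetP => t _ e_ft.
by rewrite fe {1}e_ft mulA ff -e_ft.
Qed.

Lemma Jrel_idem_D e e' : idem e -> idem e' -> Jrel mul e e' ->
  exists a, a ⋅ inv a = e /\ inv a ⋅ a = e'.
Proof.
move=> ee ee' /JrelE [e_e' /in_SsSP [c [d e_ce'd]]].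
set a := e ⋅ c ⋅ e'; set b := e' ⋅ d ⋅ e.
have e_ab : e = a ⋅ b.
  transitivity (e ⋅ (c ⋅ (e' ⋅ e') ⋅ d) ⋅ e); last by rewrite /a /b !mulA.
  by rewrite ee' -e_ce'd ee ee.
exists a; split.
- apply: (idem_stable ee (idem_mulV a)).
    apply/(nle_idemE _ (idem_mulV a)); apply: (mulV_nle ee).
    by rewrite /a !mulA ee.
  by move: (in_SsS_mulr (a ⋅ inv a) (a ⋅ b)); rewrite mulA mulVK -e_ab.
- apply: (idem_stable ee' (idem_Vmul a)).
    by apply/(nle_idemE _ (idem_Vmul a))/Vmul_nle; rewrite /a -!mulA ee'.
  apply: in_SsS_trans e_e'; apply/in_SsSP; exists a, b.
  by rewrite {1}e_ab mulA mulVK.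
Qed.

Lemma Jlt_Jclass_of J e f : Jclass mul J -> e \in J -> idem e -> f ≺ e ->
  Jlt mul (Jclass_of f) J.
Proof.
move=> cJ Je ee [fe f_neq_e]; have ff := idem_nle ee fe.
move/(nle_idemE _ ff): fe => fe; split.
  move=> x [t /mem_Jclass_of /JrelE [ft _] /in_idealE tx]; exists e => //.
  apply/in_idealE; apply: in_SsS_trans (in_SsS_trans ft tx).
  by rewrite fe; apply: in_SsS_mull.
move=> Jf_eq_J; apply: f_neq_e; apply: idem_stable => //.
have : f \in J by rewrite -Jf_eq_J Jclass_of_self.
by case/(Jclass_mem _ cJ Je)/JrelE.
Qed.

Lemma Jlt_not_above J J' x e : Jclass mul J -> Jclass mul J' -> Jlt mul J' J ->
  x \in J' -> e \in J -> ~ in_SsS x e.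
Proof.
move=> cJ cJ' [J'J J'_neq_J] J'x Je xe; apply: J'_neq_J.
have [j Jj /in_idealE jx] : in_set_ideal mul J x by apply: J'J; exists x => //; left.
have ex : in_SsS e x.
  by case/(Jclass_mem _ cJ Je)/JrelE: Jj => ej _; apply: in_SsS_trans ej jx.
apply: (Jclass_eq cJ' cJ _ Je).
exact/(Jclass_mem _ cJ' J'x)/JrelE.
Qed.

Lemma lower_mul_ub J J' e u x : Jclass mul J -> Jclass mul J' -> Jlt mul J' J ->
  e \in J -> idem e -> (forall f, f ≺ e -> f ≼ u) -> x \in J' ->
  x ⋅ (e ⋅ u) = x ⋅ e.
Proof.
move=> cJ cJ' J'J Je ee ub J'x; set f := inv x ⋅ x ⋅ e.
have ff : idem f := idemM (idem_Vmul x) ee.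
have fe : f ≼ e by apply/(nle_idemE _ ff); rewrite /f -[RHS]mulA ee.
have f_neq_e : f <> e.
  move=> f_eq_e; apply: (Jlt_not_above cJ cJ' J'J J'x Je).
  by apply/in_SsSP; exists (inv x), e; rewrite -[LHS]f_eq_e.
have fu := proj1 (nle_idemE u ff) (ub f (conj fe f_neq_e)).
have xef : x ⋅ e = x ⋅ e ⋅ f.
  transitivity (x ⋅ (inv x ⋅ x) ⋅ (e ⋅ e)); first by rewrite ee mulA mulVK.
  transitivity (x ⋅ (e ⋅ (inv x ⋅ x)) ⋅ e); last reassoc.
  by rewrite (idemC ee (idem_Vmul x)) !mulA.
by rewrite mulA xef -mulA -fu.
Qed.

Lemma eq_rm_equiv (J : {set T}) s t :
  (forall x, x \in J -> x ⋅ s = x ⋅ t) -> rm_equiv mul J s t.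
Proof. by move=> st x Jx; rewrite st. Qed.

Lemma rm_equiv_sym (J : {set T}) s t : rm_equiv mul J s t -> rm_equiv mul J t s.
Proof.
move=> st x Jx; have [st_iff st_eq] := st x Jx.
by split=> [| xt xs]; [split=> /st_iff | symmetry; apply: st_eq].
Qed.

Lemma Hrel_Jrel g e : Hrel mul g e -> Jrel mul g e.
Proof.
move=> [ge _]; apply/JrelE; split.
  by case: (proj2 (ge e) (or_introl erefl)) => [->|[y ->]];
    [apply: in_SsS_refl | apply: in_SsS_mulr].
by case: (proj1 (ge g) (or_introl erefl)) => [->|[y ->]];
  [apply: in_SsS_refl | apply: in_SsS_mulr].
Qed.

Lemma Hrel_idem_mull g e : idem e -> Hrel mul g e -> g = e ⋅ g.
Proof.
move=> ee [ge _]; case: (proj1 (ge g) (or_introl erefl)) => [->|[y ->]].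
  by rewrite ee.
by rewrite mulA ee.
Qed.

Lemma in_MJE J e g : Jclass mul J -> e \in J -> idem e ->
  in_MJ mul J e g <-> Hrel mul g e /\ forall f, f ≺ e -> f ≺ g.
Proof.
move=> cJ Je ee; split=> [[Hge rm] | [Hge lt_g]]; split=> //.
  move=> f fe; have ff := idem_nle ee (proj1 fe).
  have Jf_lt := Jlt_Jclass_of cJ Je ee fe.
  have ffe : f = f ⋅ e := proj1 (nle_idemE e ff) (proj1 fe).
  have Jf_fe : f ⋅ e \in Jclass_of f by rewrite -ffe Jclass_of_self.
  have [J_iff J_eq] := rm _ (Jclass_of_Jclass f) Jf_lt f (Jclass_of_self f).
  have fg : f ⋅ g = f ⋅ e := J_eq (proj2 J_iff Jf_fe) Jf_fe.
  split; first by apply/(nle_idemE g ff); rewrite fg -ffe.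
  move=> f_eq_g; apply: (proj2 Jf_lt).
  apply: (Jclass_eq (Jclass_of_Jclass f) cJ (Jclass_of_self f)).
  by rewrite f_eq_g; apply/(Jclass_mem _ cJ Je)/Jrel_sym/Hrel_Jrel.
move=> J' cJ' J'J; apply: eq_rm_equiv => x J'x.
rewrite {1}(Hrel_idem_mull ee Hge).
by apply: lower_mul_ub cJ cJ' J'J Je ee _ J'x => f /lt_g [].
Qed.

Definition join_of_lt (s : T) : Prop :=
  forall u, (forall y, y ≺ s -> y ≼ u) -> s ≼ u.

Lemma join_reducibleP s : join_reducible mul s <-> join_of_lt s.
Proof.
split=> [[X [X_lt [_ X_lub]]] u ub | s_join]; first by apply: X_lub => x /X_lt /ub.
pose X := [set y | (y == y ⋅ inv y ⋅ s) && (y != s)].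
have X_lt y : y \in X <-> y ≺ s.
  rewrite inE; split=> [/andP [/eqP ys /eqP y_neq_s] | [/nleE ys y_neq_s]].
    by split=> //; apply/nleE.
  by apply/andP; split; apply/eqP.
exists X; split=> [y /X_lt // |]; split=> [y /X_lt [] // | u ub].
by apply: s_join => y /X_lt /ub.
Qed.

Lemma join_of_lt_mulV s : join_of_lt s -> join_of_lt (s ⋅ inv s).
Proof.
move=> s_join u ub.
have s_us : s ≼ u ⋅ s.
  apply: s_join => y [ys y_neq_s].
  have y_eq : y = y ⋅ inv y ⋅ s by apply/nleE.
  have yy_lt : y ⋅ inv y ≺ s ⋅ inv s.
    split; first exact/(mulV_nle (idem_mulV s))/nle_mulV_mull.
    by move=> yy_eq; apply: y_neq_s; rewrite y_eq yy_eq mulVK.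
  have yy_u := proj1 (nle_idemE u (idem_mulV y)) (ub _ yy_lt).
  exists (y ⋅ inv y); split; first exact: idem_mulV.
  by rewrite {1}y_eq {1}yy_u !mulA.
apply: (idem_nle_of_sandwich (idem_mulV s)).
move/nleE: s_us => s_us.
by transitivity (s ⋅ inv s ⋅ (u ⋅ s) ⋅ inv s); [reassoc | rewrite -s_us].
Qed.

(* [y |-> a y] maps the elements strictly below [inv a a] onto those strictly
   below [a]. *)
Lemma join_of_lt_of_Vmul a : join_of_lt (inv a ⋅ a) -> join_of_lt a.
Proof.
move=> e_join u ub.
have e_Vu : inv a ⋅ a ≼ inv a ⋅ u.
  apply: e_join => f [fe f_neq_e].
  have ff := idem_nle (idem_Vmul a) fe.
  have fe' : f = inv a ⋅ a ⋅ f.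
    by have := nle_mulV_mull fe; rewrite (inv_idem (idem_Vmul a)) idem_Vmul.
  have af_lt : a ⋅ f ≺ a.
    split; first exact: nle_mulr.
    by move=> af_eq_a; apply: f_neq_e; rewrite fe' -mulA af_eq_a.
  have af_u : a ⋅ f = a ⋅ f ⋅ (inv a ⋅ u).
    have /nleE := ub _ af_lt; rewrite invM (inv_idem ff) => af_eq.
    by rewrite {1}af_eq !mulA -[a ⋅ f ⋅ f]mulA ff.
  by apply/(nle_idemE _ ff); rewrite {1}fe' -mulA af_u !mulA -fe'.
move/(nle_idemE _ (idem_Vmul a)): e_Vu; rewrite mulA invVK => Va_eq.
by apply/nleE; rewrite -{1}(mulVK a) -mulA Va_eq mulA.
Qed.

Lemma join_of_lt_Jclass J s e : Jclass mul J -> s \in J -> join_of_lt s ->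
  e \in J -> idem e -> join_of_lt e.
Proof.
move=> cJ Js s_join Je ee.
have [a [aVa Vaa]] : exists a, a ⋅ inv a = e /\ inv a ⋅ a = s ⋅ inv s.
  apply: (Jrel_idem_D ee (idem_mulV s)).
  exact: Jrel_trans (proj1 (Jclass_mem _ cJ Je) Js) (Jrel_mulV s).
rewrite -aVa; apply/join_of_lt_mulV/join_of_lt_of_Vmul.
by rewrite Vaa; apply: join_of_lt_mulV.
Qed.

Lemma idem_nle_mulV e a : idem e -> in_SsS (e ⋅ a) e -> e ≼ a ⋅ inv a.
Proof.
move=> ee ea_e; set p := e ⋅ a ⋅ inv (e ⋅ a).
have p_eq_e : p = e.
  apply: (idem_stable ee (idem_mulV _)).
    apply/(nle_idemE _ (idem_mulV _)); apply: (mulV_nle ee).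
    by rewrite mulA ee.
  apply: in_SsS_trans ea_e.
  by move: (in_SsS_mulr p (e ⋅ a)); rewrite /p mulVK.
apply: (idem_nle_of_sandwich ee).
by rewrite -[RHS]p_eq_e /p invM (inv_idem ee) !mulA.
Qed.

Lemma lower_mul_eq J e a b y : Jclass mul J -> e \in J -> idem e ->
  (forall J', Jclass mul J' -> Jlt mul J' J -> rm_equiv mul J' a b) ->
  e ≼ a ⋅ inv a -> y ≺ e -> y ⋅ a = y ⋅ b.
Proof.
move=> cJ Je ee ab_lower e_aa ye; have yy := idem_nle ee (proj1 ye).
have y_aa : y = y ⋅ (a ⋅ inv a).
  exact/(nle_idemE _ yy)/(nle_trans (proj1 ye) e_aa).
have ya_Jy : y ⋅ a \in Jclass_of y.
  apply/mem_Jclass_of/JrelE; split; first exact: in_SsS_mulr.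
  by apply/in_SsSP; exists y, (inv a); rewrite mulA yy -mulA -y_aa.
have Jy_lt := Jlt_Jclass_of cJ Je ee ye.
have [ab_iff ab_eq] := ab_lower _ (Jclass_of_Jclass y) Jy_lt y (Jclass_of_self y).
exact: ab_eq ya_Jy (proj1 ab_iff ya_Jy).
Qed.

(* [e a] and [e b] are compared through [e <= b inv a], which holds because
   every [y < e] satisfies [y b inv a = y a inv a = y]. *)
Lemma join_mul_eq e a b : idem e -> join_of_lt e -> e ≼ a ⋅ inv a ->
  (forall y, y ≺ e -> y ⋅ a = y ⋅ b) -> e ⋅ a = e ⋅ b.
Proof.
move=> ee e_join e_aa lower_eq.
have e_ba : e ≼ b ⋅ inv a.
  apply: e_join => y ye; have yy := idem_nle ee (proj1 ye).
  apply/(nle_idemE _ yy); rewrite mulA -lower_eq // -mulA.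
  exact/(nle_idemE _ yy)/(nle_trans (proj1 ye) e_aa).
move/(nle_idemE _ ee): e_aa => e_aa; move/(nle_idemE _ ee): e_ba => e_ba.
have /nleE -> : e ⋅ a ≼ e ⋅ b.
  apply: nle_of_mulV; rewrite invM (inv_idem ee) !mulA.
  by rewrite -[e ⋅ b ⋅ inv a]mulA -e_ba -[e ⋅ a ⋅ inv a]mulA -e_aa.
by rewrite invM (inv_idem ee) !mulA -[e ⋅ a ⋅ inv a]mulA -e_aa !ee.
Qed.

Lemma rm_eq_of_join J a b x : Jclass mul J ->
  (forall e, e \in J -> idem e -> join_of_lt e) ->
  (forall J', Jclass mul J' -> Jlt mul J' J -> rm_equiv mul J' a b) ->
  x \in J -> x ⋅ a \in J -> x ⋅ a = x ⋅ b.
Proof.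
move=> cJ J_join ab_lower Jx Jxa; set e := inv x ⋅ x.
have ee : idem e := idem_Vmul x.
have x_xe : x = x ⋅ e by rewrite /e mulA mulVK.
have Je : e \in J by apply/(Jclass_mem _ cJ Jx)/Jrel_Vmul.
have ea_e : in_SsS (e ⋅ a) e.
  have ea_xa : in_SsS (e ⋅ a) (x ⋅ a).
    by rewrite {1}x_xe -mulA; apply: in_SsS_mull.
  have [xa_x _] := proj1 (JrelE _ _) (proj1 (Jclass_mem _ cJ Jxa) Jx).
  have [x_e _] := proj1 (JrelE _ _) (Jrel_Vmul x).
  exact: in_SsS_trans ea_xa (in_SsS_trans xa_x x_e).
have e_aa := idem_nle_mulV ee ea_e.
have ea_eb : e ⋅ a = e ⋅ b.
  apply: (join_mul_eq ee (J_join _ Je ee) e_aa).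
  by move=> y; apply: (lower_mul_eq cJ Je ee ab_lower e_aa).
by rewrite x_xe -mulA ea_eb mulA.
Qed.

Lemma join_reducible_RM_reducible J s : Jclass mul J -> s \in J ->
  join_reducible mul s -> ~ RM_irreducible mul J.
Proof.
move=> cJ Js /join_reducibleP s_join; apply=> a b ab_lower.
have J_join e : e \in J -> idem e -> join_of_lt e := join_of_lt_Jclass cJ Js s_join.
have ba_lower J' : Jclass mul J' -> Jlt mul J' J -> rm_equiv mul J' b a.
  by move=> cJ' J'J; apply/rm_equiv_sym/ab_lower.
move=> x Jx; split; first split=> [Jxa | Jxb].
- by rewrite -(rm_eq_of_join cJ J_join ab_lower Jx Jxa).
- by rewrite -(rm_eq_of_join cJ J_join ba_lower Jx Jxb).
- by move=> Jxa _; apply: (rm_eq_of_join cJ J_join ab_lower Jx Jxa).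
Qed.

Lemma RM_reducible_join_reducible J : Jclass mul J ->
  (forall s t, (forall J', Jclass mul J' -> Jlt mul J' J -> rm_equiv mul J' s t) ->
     rm_equiv mul J s t) ->
  exists2 e, e \in J & join_reducible mul e.
Proof.
move=> cJ J_red; have [e Je ee] := Jclass_idem cJ.
exists e => //; apply/join_reducibleP => u ub.
have e_eu : rm_equiv mul J e (e ⋅ u).
  apply: J_red => J' cJ' J'J; apply: eq_rm_equiv => x J'x.
  by rewrite (lower_mul_ub cJ cJ' J'J Je ee ub J'x).
have Jee : e ⋅ e \in J by rewrite ee.
have [ee_iff ee_eq] := e_eu e Je.
exists e; split=> //.
by have := ee_eq Jee (proj1 ee_iff Jee); rewrite mulA ee.
Qed.

End InverseSemigroup.

Theorem proposition2p12 (T : finType) (mul : T -> T -> T)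
    (mulA : associative mul) (hinv : inverse_semigroup mul) :
  (forall J : {set T}, Jclass mul J ->
     (RM_irreducible mul J <-> forall s, s \in J -> join_irreducible mul s)) /\
  (forall J : {set T}, Jclass mul J ->
     forall e, e \in J -> idempotent_el mul e ->
     forall g, in_MJ mul J e g <->
       (Hrel mul g e /\ forall f, nlt mul f e -> nlt mul f g)).
Proof.
split=> [J cJ | J cJ e Je ee g]; last exact: (in_MJE mulA hinv g cJ Je ee).
split=> [irr s Js s_red | all_irr J_red].
  exact: (join_reducible_RM_reducible mulA hinv cJ Js s_red irr).
have [e Je e_red] := RM_reducible_join_reducible mulA hinv cJ J_red.
exact: all_irr e Je e_red.
Qed.
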